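(* Let $A$ and $B$ be groups admitting regular left-orders. Then the free product $A*B$ admits a one-counter left-order.
   Context: A left-order on a group $G$ is a total order invariant under left multiplication, with positive cone $\{g:1\prec g\}$. It is regular (resp. one-counter) if $G$ is finitely generated and there exist a finite set $X$, a surjective monoid homomorphism $\pi\colon X^*\to G$ and a language $\mathcal{L}\subseteq X^*$ accepted by a finite state automaton (resp. by a nondeterministic pushdown automaton with a single stack symbol) with $\pi(\mathcal{L})$ equal to the positive cone. *)

From mathcomp Require Import all_boot.
Set Implicit Arguments. Unset Strict Implicit. Unset Printing Implicit Defensive.

Record group := Group {
  gcar :> Type;
  gmul : gcar -> gcar -> gcar;
  gone : gcar;
  ginv : gcar -> gcar;
  gmulA : forall x y z, gmul x (gmul y z) = gmul (gmul x y) z;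
  gmul1l : forall x, gmul gone x = x;
  gmulVl : forall x, gmul (ginv x) x = gone }.

Definition is_hom (G H : group) (f : G -> H) : Prop :=
  forall x y, f (gmul x y) = gmul (f x) (f y).

Definition is_free_product (A B G : group) (iA : A -> G) (iB : B -> G) : Prop :=
  is_hom iA /\ is_hom iB /\
  forall (H : group) (fA : A -> H) (fB : B -> H), is_hom fA -> is_hom fB ->
    (exists f : G -> H, is_hom f /\ (forall a, f (iA a) = fA a)
                                 /\ (forall b, f (iB b) = fB b)) /\
    (forall f g : G -> H, is_hom f -> is_hom g ->
       (forall a, f (iA a) = g (iA a)) -> (forall b, f (iB b) = g (iB b)) ->
       forall x, f x = g x).

Definition is_left_order (G : group) (lt : G -> G -> Prop) : Prop :=
  (forall x, ~ lt x x) /\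
  (forall x y z, lt x y -> lt y z -> lt x z) /\
  (forall x y, x = y \/ lt x y \/ lt y x) /\
  (forall g x y, lt x y -> lt (gmul g x) (gmul g y)).

Definition positive_cone (G : group) (lt : G -> G -> Prop) (g : G) : Prop :=
  lt (gone G) g.

Definition is_monoid_hom (X : Type) (G : group) (pi : seq X -> G) : Prop :=
  pi [::] = gone G /\ forall u v, pi (u ++ v) = gmul (pi u) (pi v).

Definition image_is_cone (X : Type) (G : group) (lt : G -> G -> Prop)
    (pi : seq X -> G) (L : seq X -> Prop) : Prop :=
  (forall w, L w -> positive_cone lt (pi w)) /\
  (forall g, positive_cone lt g -> exists w, L w /\ pi w = g).

Record nfa (X : finType) := NFA {
  nstate : finType;
  nstart : nstate;
  nfinal : pred nstate;
  ntrans : nstate -> X -> nstate -> bool }.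

Inductive nfa_reach (X : finType) (M : nfa X) : nstate M -> seq X -> nstate M -> Prop :=
| nfa_nil q : nfa_reach q [::] q
| nfa_cons q x q' w q'' : ntrans q x q' -> nfa_reach q' w q'' ->
    nfa_reach q (x :: w) q''.

Definition nfa_accepts (X : finType) (M : nfa X) (w : seq X) : Prop :=
  exists q, @nfa_reach X M (nstart M) w q /\ nfinal q.

(** * One-counter automata: nondeterministic pushdown automata whose stack
    alphabet consists of a bottom marker and a single stack symbol c; the
    stack is c^n ⊥ and is represented by n.  A transition
    (q, a, z, q', k) with a : option X (None = epsilon move) applies when
    the top of the stack is ⊥ (z = true, i.e. n = 0) or c (z = false, n > 0);
    it pops the top symbol and pushes c^k (followed by ⊥ again if the popped
    symbol was ⊥). *)
Record oca (X : finType) := OCA {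
  ostate : finType;
  ostart : ostate;
  ofinal : pred ostate;
  otrans : seq (ostate * option X * bool * ostate * nat) }.

Definition oca_step (X : finType) (M : oca X) (q : ostate M) (n : nat)
    (a : option X) (q' : ostate M) (n' : nat) : Prop :=
  exists z k, (q, a, z, q', k) \in otrans M /\ z = (n == 0) /\
              n' = (if z then k else n.-1 + k).

Inductive oca_reach (X : finType) (M : oca X) :
    ostate M -> nat -> seq X -> ostate M -> nat -> Prop :=
| oca_nil q n : oca_reach q n [::] q n
| oca_eps q n q' n' w q'' n'' : @oca_step X M q n None q' n' ->
    oca_reach q' n' w q'' n'' -> oca_reach q n w q'' n''
| oca_read q n x q' n' w q'' n'' : @oca_step X M q n (Some x) q' n' ->
    oca_reach q' n' w q'' n'' -> oca_reach q n (x :: w) q'' n''.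

Definition oca_accepts (X : finType) (M : oca X) (w : seq X) : Prop :=
  exists q n, @oca_reach X M (ostart M) 0 w q n /\ ofinal q.

Definition regular_left_order (G : group) (lt : G -> G -> Prop) : Prop :=
  is_left_order lt /\
  exists (X : finType) (pi : seq X -> G),
    is_monoid_hom pi /\ (forall g, exists w, pi w = g) /\
    exists M : nfa X, image_is_cone lt pi (nfa_accepts M).

Definition one_counter_left_order (G : group) (lt : G -> G -> Prop) : Prop :=
  is_left_order lt /\
  exists (X : finType) (pi : seq X -> G),
    is_monoid_hom pi /\ (forall g, exists w, pi w = g) /\
    exists M : oca X, image_is_cone lt pi (oca_accepts M).

Definition admits_regular_left_order (G : group) : Prop :=
  exists lt : G -> G -> Prop, regular_left_order lt.

Definition admits_one_counter_left_order (G : group) : Prop :=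
  exists lt : G -> G -> Prop, one_counter_left_order lt.

(* Write g in A * B as its reduced word, an alternating sequence of nontrivial syllables
   of A and B, and let weight g be the number of A-syllables other than the last one
   minus the number of negative syllables.  When the product of two reduced words is
   reduced, each cancelling pair of syllables contains exactly one negative syllable;
   this gives weight (g h) >= weight g + weight h, and weight g + weight g^-1 = -1 for
   g <> 1.  Hence the g <> 1 of nonnegative weight form the positive cone of a left order.
   Its words are recognised as follows: the finite automaton of the positive cone of A
   reads positive A-syllables, the same automaton run backwards on formal inverse
   letters reads negative ones, and likewise for B; a one-counter automaton cuts its
   input into such syllable blocks, keeps the absolute value of the running weight on
   its stack and its sign in the finite control, and accepts when the total is >= 0. *)

From Stdlib Require Import ZArith Lia.
From mathcomp Require Import all_boot boolp zify.

Set Implicit Arguments. Unset Strict Implicit. Unset Printing Implicit Defensive.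

(** * Groups and left orders *)

Section GroupTheory.
Variable K : group.
Local Notation "x * y" := (gmul x y).
Local Notation "1" := (gone K).
Local Notation "x ^-1" := (ginv x).

Lemma gmulV (x : K) : x * x^-1 = 1.
Proof.
have e : x^-1^-1 * (x^-1 * x) * x^-1 = x * x^-1 by rewrite gmulA gmulVl gmul1l.
by rewrite -e gmulVl -gmulA gmul1l gmulVl.
Qed.

Lemma gmul1r (x : K) : x * 1 = x.
Proof. by rewrite -(gmulVl x) gmulA gmulV gmul1l. Qed.

Lemma gmulKV (x y : K) : x^-1 * (x * y) = y.
Proof. by rewrite gmulA gmulVl gmul1l. Qed.

Lemma gmulVK (x y : K) : x * (x^-1 * y) = y.
Proof. by rewrite gmulA gmulV gmul1l. Qed.

Lemma gmulI (x y z : K) : x * y = x * z -> y = z.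
Proof. by move=> e; rewrite -(gmulKV x y) e gmulKV. Qed.

Lemma ginv_uniq (x y : K) : x * y = 1 -> y = x^-1.
Proof. by move=> e; apply: (@gmulI x); rewrite e gmulV. Qed.

Lemma ginv1 : 1^-1 = 1.
Proof. by symmetry; apply: ginv_uniq; rewrite gmul1l. Qed.

Lemma ginvK (x : K) : x^-1^-1 = x.
Proof. by symmetry; apply: ginv_uniq; rewrite gmulVl. Qed.

Lemma ginvM (x y : K) : (x * y)^-1 = y^-1 * x^-1.
Proof. by symmetry; apply: ginv_uniq; rewrite -gmulA gmulVK gmulV. Qed.

Lemma gmul_eq1C (x y : K) : x * y = 1 -> y * x = 1.
Proof. by move=> /ginv_uniq ->; rewrite gmulVl. Qed.

End GroupTheory.

Lemma hom1 (K H : group) (f : K -> H) : is_hom f -> f (gone K) = gone H.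
Proof. by move=> hf; apply: (@gmulI _ (f (gone K))); rewrite -hf gmul1l gmul1r. Qed.

Lemma homV (K H : group) (f : K -> H) (x : K) : is_hom f -> f (ginv x) = ginv (f x).
Proof. by move=> hf; apply: ginv_uniq; rewrite -hf gmulV (hom1 hf). Qed.

Section LeftOrderTheory.
Variables (K : group) (lt : K -> K -> Prop).
Hypothesis ltK : is_left_order lt.
Local Notation "x * y" := (gmul x y).
Local Notation "1" := (gone K).

Lemma lt_irr x : ~ lt x x. Proof. by case: ltK. Qed.

Lemma lt_trans x y z : lt x y -> lt y z -> lt x z.
Proof. by case: ltK => _ [h _]; apply: h. Qed.

Lemma lt_total x y : x = y \/ lt x y \/ lt y x.
Proof. by case: ltK => _ [_ [h _]]. Qed.

Lemma lt_mul2l g x y : lt x y -> lt (g * x) (g * y).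
Proof. by case: ltK => _ [_ [_ h]]; apply: h. Qed.

Lemma lt_asym x y : lt x y -> ~ lt y x.
Proof. by move=> h1 h2; apply: (lt_irr (lt_trans h1 h2)). Qed.

Lemma lt_neq1 a : lt 1 a -> a <> 1.
Proof. by move=> h e; rewrite e in h; exact: lt_irr h. Qed.

Lemma gt1_mul a b : lt 1 a -> lt 1 b -> lt 1 (a * b).
Proof. by move=> ha hb; apply: (lt_trans ha); rewrite -{1}(gmul1r a); apply: lt_mul2l. Qed.

Lemma gt1_nlt1 a : a <> 1 -> ~ lt a 1 -> lt 1 a.
Proof. by move=> h1 h2; case: (lt_total a 1) => [|[|]]. Qed.

Lemma lt1_gt1V a : lt a 1 -> lt 1 (ginv a).
Proof. by move=> h; have := lt_mul2l (ginv a) h; rewrite gmul1r gmulVl. Qed.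

Lemma gt1_lt1V a : lt 1 a -> lt (ginv a) 1.
Proof. by move=> h; have := lt_mul2l (ginv a) h; rewrite gmul1r gmulVl. Qed.

Lemma lt1_inverse a c : a * c = 1 -> a <> 1 -> (lt a 1 <-> ~ lt c 1).
Proof.
move=> e na; have ec := gmul_eq1C e; split.
- move=> h hc; have := lt_mul2l c h; rewrite ec gmul1r => h'.
  exact: lt_asym h' hc.
- move=> hc; apply: contrapT => ha.
  by have := lt_mul2l c (gt1_nlt1 na ha); rewrite ec gmul1r.
Qed.

Lemma lt1_mul a c : a <> 1 -> c <> 1 -> lt (a * c) 1 -> lt a 1 \/ lt c 1.
Proof.
move=> na nc h; apply: contrapT => /not_orP [ha hc].
exact: lt_asym h (gt1_mul (gt1_nlt1 na ha) (gt1_nlt1 nc hc)).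
Qed.

End LeftOrderTheory.

Section ConeOrder.
Variables (K : group) (P : K -> Prop).
Hypotheses (P_mul : forall x y, P x -> P y -> P (gmul x y)) (P_1 : ~ P (gone K))
  (P_total : forall g, g <> gone K -> P g \/ P (ginv g)).

Definition cone_lt (x y : K) : Prop := P (gmul (ginv x) y).

Lemma cone_lt_left_order : is_left_order cone_lt.
Proof.
split; [|split; [|split]] => [x|x y z hxy hyz|x y|g x y].
- by rewrite /cone_lt gmulVl.
- by have := P_mul hxy hyz; rewrite /cone_lt -gmulA gmulVK.
- have [e|] := pselect (gmul (ginv x) y = gone K).
    by left; rewrite -(gmulVK x y) e gmul1r.
  by case/P_total; rewrite ?ginvM ?ginvK; tauto.
- by rewrite /cone_lt ginvM -gmulA gmulKV.
Qed.

Lemma positive_cone_lt g : positive_cone cone_lt g <-> P g.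
Proof. by rewrite /positive_cone /cone_lt ginv1 gmul1l. Qed.

End ConeOrder.

(** * Reduced words in a free product *)

Section ReducedWords.
Variables (A B : group).

Definition syllable : Type := (A + B)%type.

Definition isA (x : syllable) : bool := if x is inl _ then true else false.

Definition nontrivial (x : syllable) : bool :=
  match x with inl a => ~~ `[< a = gone A >] | inr b => ~~ `[< b = gone B >] end.

Definition cancels (x y : syllable) : bool :=
  match x, y with
  | inl a, inl c => `[< gmul a c = gone A >]
  | inr b, inr d => `[< gmul b d = gone B >]
  | _, _ => false
  end.

Fixpoint reduced (w : seq syllable) : bool :=
  if w is x :: w' then
    [&& nontrivial x, (if w' is y :: _ then isA x != isA y else true) & reduced w']
  else true.

Definition act (x : syllable) (w : seq syllable) : seq syllable :=
  match x, w with
  | inl a, inl c :: w' => if `[< gmul a c = gone A >] then w' else inl (gmul a c) :: w'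
  | inr b, inr d :: w' => if `[< gmul b d = gone B >] then w' else inr (gmul b d) :: w'
  | _, _ => if nontrivial x then x :: w else w
  end.

Definition wmul (u v : seq syllable) : seq syllable := foldr act v u.

Lemma reduced_behead x w : reduced (x :: w) -> reduced w.
Proof. by case/and3P. Qed.

Lemma reduced_nontrivial x w : reduced (x :: w) -> nontrivial x.
Proof. by case/and3P. Qed.

Lemma reduced_alt x y w : reduced [:: x, y & w] -> isA x != isA y.
Proof. by case/and3P. Qed.

Lemma act_reduced x w : reduced w -> reduced (act x w).
Proof.
case: x => a; case: w => [|[c|c] w] //= hw; case: ifP => [h|/negbT h] //=;
  rewrite ?h //=; case/and3P: hw => // _ h1 h2; by case: w h1 h2 => [|[]].
Qed.

Lemma act_nontrivial x : nontrivial x -> act x [::] = [:: x].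
Proof. by case: x => a /= ->. Qed.

Lemma act_alt x y w : nontrivial x -> isA x != isA y -> act x (y :: w) = [:: x, y & w].
Proof. by case: x => a /= ->; case: y. Qed.

Lemma act_cancel x y w : cancels x y -> act x (y :: w) = w.
Proof. by case: x => a; case: y => c //= ->. Qed.

Lemma cancels_isA x y : cancels x y -> isA x = isA y.
Proof. by case: x => a; case: y. Qed.

Lemma wmulw0 u : reduced u -> wmul u [::] = u.
Proof.
elim: u => [|x u IH] // hu; rewrite /= IH ?(reduced_behead hu) //.
case: u hu {IH} => [|y u] hu; first exact: act_nontrivial (reduced_nontrivial hu).
exact: act_alt (reduced_nontrivial hu) (reduced_alt hu).
Qed.

Lemma act_trivial x w : ~~ nontrivial x -> reduced w -> act x w = w.
Proof.
case: x => a /negbNE /asboolP -> {a}; case: w => [|[c|c] w] //= hw;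
  rewrite ?gmul1l ?(asboolT (erefl (gone _))) // ifN //; by case/and3P: hw.
Qed.

Lemma act_mulA a a' w : reduced w -> act (inl (gmul a a')) w = act (inl a) (act (inl a') w).
Proof.
case: w => [|[c|c] w] /= hw; last 2 first.
- case: (asboolP (gmul a' c = gone A)) => [e|_]; last by rewrite /= gmulA.
  rewrite -gmulA e gmul1r.
  by case: w hw => [|[?|?] ?] /=; rewrite ?andbF // => _; case: asboolP.
- by case: (asboolP (a' = gone A)) => [->|_] /=; rewrite ?gmul1r //; case: asboolP.
- by case: (asboolP (a' = gone A)) => [->|_] /=; rewrite ?gmul1r //; case: asboolP.
Qed.

Lemma act_mulB b b' w : reduced w -> act (inr (gmul b b')) w = act (inr b) (act (inr b') w).
Proof.
case: w => [|[c|c] w] /= hw; last first.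
- case: (asboolP (gmul b' c = gone B)) => [e|_]; last by rewrite /= gmulA.
  rewrite -gmulA e gmul1r.
  by case: w hw => [|[?|?] ?] /=; rewrite ?andbF // => _; case: asboolP.
- by case: (asboolP (b' = gone B)) => [->|_] /=; rewrite ?gmul1r //; case: asboolP.
- by case: (asboolP (b' = gone B)) => [->|_] /=; rewrite ?gmul1r //; case: asboolP.
Qed.
Lemma wmul_rcons u x v : wmul (rcons u x) v = wmul u (act x v).
Proof. by rewrite /wmul foldr_rcons. Qed.

Lemma reduced_rcons u x : reduced (rcons u x) ->
  [/\ reduced u, nontrivial x & forall y u', u = y :: u' -> isA (last y u') != isA x].
Proof.
elim: u => [|y u IH]; first by move=> /reduced_nontrivial.
rewrite rcons_cons => h; have [hu hx hlast] := IH (reduced_behead h).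
case/and3P: h => hy hyu _; split=> // [|_ _ [<- <-]].
- by case: u hyu hu {IH hlast} => [|z u] /=; rewrite hy => // -> ->.
- by case: u hyu hlast {IH hu} => [|z u] // _ /(_ z u erefl).
Qed.

End ReducedWords.

(** * The weight of a reduced word *)

Section Weight.
Variables (A B : group) (ltA : A -> A -> Prop) (ltB : B -> B -> Prop).
Hypotheses (ltA_order : is_left_order ltA) (ltB_order : is_left_order ltB).
Local Notation syllable := (syllable A B).
Local Open Scope Z_scope.

Definition negative (x : syllable) : bool :=
  match x with inl a => `[< ltA a (gone A) >] | inr b => `[< ltB b (gone B) >] end.

Definition sign_weight (x : syllable) : Z := - Z.b2z (negative x).

Fixpoint weight (w : seq syllable) : Z :=
  if w is x :: w' then sign_weight x + (if w' is _ :: _ then Z.b2z (isA x) else 0) + weight w'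
  else 0.

Definition last_isA (u : seq syllable) : bool :=
  if u is y :: u' then isA (last y u') else false.

Lemma weight_cons2 x y r :
  weight [:: x, y & r] = sign_weight x + Z.b2z (isA x) + weight (y :: r).
Proof. by []. Qed.

Lemma weight_rcons u x : weight (rcons u x) = weight u + sign_weight x + Z.b2z (last_isA u).
Proof. by elim: u => [|y [|z u] /= IH]; rewrite /= ?IH; lia. Qed.

Lemma sign_weight_cancel x y : nontrivial x -> cancels x y -> sign_weight x + sign_weight y = -1.
Proof.
rewrite /sign_weight; case: x => a; case: y => c //= /asboolPn na /asboolP e.
- by have := lt1_inverse ltA_order e na; do 2 case: asboolP; tauto.
- by have := lt1_inverse ltB_order e na; do 2 case: asboolP; tauto.
Qed.

Lemma act_merge x y r : nontrivial x -> nontrivial y -> isA x = isA y -> ~~ cancels x y ->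
  exists z, [/\ act x (y :: r) = z :: r, isA z = isA x
             & sign_weight x + sign_weight y <= sign_weight z].
Proof.
rewrite /sign_weight; case: x => a; case: y => c //= /asboolPn na /asboolPn nc _ /negbTE ->.
- exists (inl (gmul a c)); split=> //=.
  case: (asboolP (ltA (gmul a c) _)) => [/(lt1_mul ltA_order na nc) h|_].
    by case: h => h; rewrite (asboolT h); case: asboolP => _ /=; lia.
  by do 2 case: asboolP => _ /=; lia.
- exists (inr (gmul a c)); split=> //=.
  case: (asboolP (ltB (gmul a c) _)) => [/(lt1_mul ltB_order na nc) h|_].
    by case: h => h; rewrite (asboolT h); case: asboolP => _ /=; lia.
  by do 2 case: asboolP => _ /=; lia.
Qed.

Lemma wmul_nocancel u x v : reduced (rcons u x) -> reduced v ->
  ~~ (if v is y :: _ then cancels x y else false) ->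
  exists z r, [/\ wmul (rcons u x) v = z :: r, isA z = isA (head x u)
                 & weight (rcons u x) + weight v <= weight (z :: r)].
Proof.
elim: u => [|y u IH] hu hv hxv.
- have hx := reduced_nontrivial hu; case: v hv hxv => [|y v] hv hxv.
    by exists x, [::]; rewrite /= act_nontrivial //; split=> //; lia.
  have [exy|nxy] := eqVneq (isA x) (isA y).
    have [z [e hz le_sw]] := act_merge v hx (reduced_nontrivial hv) exy hxv.
    exists z, v; rewrite /= e; split=> //; rewrite /= hz exy.
    by case: v {hv hxv e} => /= [|? ?]; lia.
  exists x, (y :: v); rewrite /= act_alt //; split=> //=.
  by case: (isA x) => /=; lia.
- rewrite rcons_cons in hu *.
  have [z [r [e hz le_w]]] := IH (reduced_behead hu) hv hxv.
  have yz : isA y != isA z.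
    by rewrite hz; case: u hu {IH le_w e hz} => [|w u] /reduced_alt.
  exists y, (z :: r); rewrite /= e act_alt ?(reduced_nontrivial hu) //; split=> //.
  by case: u hu le_w {IH hz yz e} => [|w u] /= _; case: (isA y) => /=; lia.
Qed.

Lemma weight_cancel u x y v : reduced (rcons u x) -> cancels x y ->
  weight (rcons u x) + weight (y :: v) =
    weight u + weight v - 1 + Z.b2z (~~ nilp u && ~~ isA y) + Z.b2z (~~ nilp v && isA y).
Proof.
move=> hu hxy; have [_ hx hlast] := reduced_rcons hu.
have last_side : last_isA u = ~~ nilp u && ~~ isA y.
  rewrite -(cancels_isA hxy); case: u hlast {hu} => [|w u] // /(_ w u erefl) /=.
  by case: (isA x); case: (isA _).
rewrite weight_rcons last_side; have := sign_weight_cancel hx hxy.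
by case: v => [|z v] /=; lia.
Qed.

Lemma weight_wmul_ge u v : reduced u -> reduced v -> weight u + weight v <= weight (wmul u v).
Proof.
elim/last_ind: u v => [|u x IH] v hu hv; first by rewrite /=; lia.
case: v hv => [|y v] hv; first by have [z [r [-> _ ?]]] := wmul_nocancel hu hv isT.
have [hxy|hxy] := boolP (cancels x y); last first.
  by have [z [r [-> _ ?]]] := wmul_nocancel hu hv hxy.
rewrite wmul_rcons act_cancel // weight_cancel //.
have [hu' _ _] := reduced_rcons hu; have := IH v hu' (reduced_behead hv).
by case: (isA y); case: (nilp u); case: (nilp v) => /=; lia.
Qed.

Lemma weight_wmul_nil u v : reduced u -> reduced v -> ~~ nilp u -> wmul u v = [::] ->
  weight u + weight v = -1.
Proof.
elim/last_ind: u v => [//|u x IH] v hu hv _.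
case: v hv => [|y v] hv; first by have [z [r [-> _ _]]] := wmul_nocancel hu hv isT.
have [hxy|hxy] := boolP (cancels x y); last first.
  by have [z [r [-> _ _]]] := wmul_nocancel hu hv hxy.
have [hu' _ _] := reduced_rcons hu.
rewrite wmul_rcons act_cancel // weight_cancel // => e.
have [/nilP u0|nu] := boolP (nilp u); first by subst u; move: e => /= ->; rewrite /=; lia.
have nv : ~~ nilp v by apply: contraNN nu => /nilP v0; rewrite -(wmulw0 hu') -v0 e.
have := IH v hu' (reduced_behead hv) nu e.
by rewrite (negbTE nv); case: (isA y) => /=; lia.
Qed.

End Weight.

(** * Normal forms *)

Section Subgroup.
Variables (G : group) (S : G -> Prop).
Hypotheses (S1 : S (gone G)) (SM : forall x y, S x -> S y -> S (gmul x y))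
  (SV : forall x, S x -> S (ginv x)).

Definition subgroup_mul (x y : {g | S g}) : {g | S g} :=
  exist _ (gmul (sval x) (sval y)) (SM (svalP x) (svalP y)).
Definition subgroup_inv (x : {g | S g}) : {g | S g} := exist _ (ginv (sval x)) (SV (svalP x)).

Lemma subgroup_mulA x y z :
  subgroup_mul x (subgroup_mul y z) = subgroup_mul (subgroup_mul x y) z.
Proof. by apply: eq_exist; rewrite /= gmulA. Qed.
Lemma subgroup_mul1l x : subgroup_mul (exist _ (gone G) S1) x = x.
Proof. by case: x => x Sx; apply: eq_exist; rewrite /= gmul1l. Qed.
Lemma subgroup_mulVl x : subgroup_mul (subgroup_inv x) x = exist _ (gone G) S1.
Proof. by apply: eq_exist; rewrite /= gmulVl. Qed.

Definition subgroup : group := Group subgroup_mulA subgroup_mul1l subgroup_mulVl.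

End Subgroup.

Lemma free_product_ind (A B G : group) (iA : A -> G) (iB : B -> G) (P : G -> Prop) :
  is_free_product iA iB -> P (gone G) -> (forall x y, P x -> P y -> P (gmul x y)) ->
  (forall x, P x -> P (ginv x)) -> (forall a, P (iA a)) -> (forall b, P (iB b)) ->
  forall g, P g.
Proof.
move=> [homA [homB univ]] P1 PM PV PA PB g.
pose H := subgroup P1 PM PV.
pose fA a : H := exist _ (iA a) (PA a); pose fB b : H := exist _ (iB b) (PB b).
have [[f [f_hom [fA_eq fB_eq]]] _] := univ H fA fB
  (fun x y => eq_exist _ _ (homA x y)) (fun x y => eq_exist _ _ (homB x y)).
have [_ uniq] := univ G iA iB homA homB.
have <- : sval (f g) = g.
  by apply: (uniq (sval \o f) id) => // [x y|a|b]; rewrite /= ?f_hom ?fA_eq ?fB_eq.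
exact: svalP.
Qed.

Section SymmetricGroup.
Variable T : Type.

Definition bijection := {p : (T -> T) * (T -> T) | cancel p.1 p.2 /\ cancel p.2 p.1}.

Lemma bijection_eq (p q : bijection) :
  (sval p).1 =1 (sval q).1 -> (sval p).2 =1 (sval q).2 -> p = q.
Proof.
case: p q => [[p1 p2] hp] [[q1 q2] hq] /= /funext e1 /funext e2.
by subst q1 q2; apply: eq_exist.
Qed.

Definition bij_comp (p q : bijection) : bijection.
Proof.
exists ((sval p).1 \o (sval q).1, (sval q).2 \o (sval p).2).
by case: p q => [[p1 p2] [hp1 hp2]] [[q1 q2] [hq1 hq2]]; split; apply: can_comp.
Defined.

Definition bij_id : bijection := exist _ (id, id) (conj (@frefl _ _ _) (@frefl _ _ _)).

Definition bij_inv (p : bijection) : bijection.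
Proof. by exists ((sval p).2, (sval p).1); case: p => [[p1 p2] [hp1 hp2]]. Defined.

Lemma bij_compA p q r : bij_comp p (bij_comp q r) = bij_comp (bij_comp p q) r.
Proof. exact: bijection_eq. Qed.
Lemma bij_id_comp p : bij_comp bij_id p = p.
Proof. exact: bijection_eq. Qed.
Lemma bij_inv_comp p : bij_comp (bij_inv p) p = bij_id.
Proof. by case: p => [[p1 p2] [hp1 hp2]]; apply: bijection_eq. Qed.

Definition sym_group : group := Group bij_compA bij_id_comp bij_inv_comp.

Definition bij_app (p : sym_group) : T -> T := (sval p).1.

Lemma bij_appM p q x : bij_app (gmul p q) x = bij_app p (bij_app q x).
Proof. by []. Qed.

Section Action.
Variables (K : group) (act : K -> T -> T).
Hypotheses (act1 : forall x, act (gone K) x = x)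
  (actM : forall g h x, act (gmul g h) x = act g (act h x)).

Definition action_bij (g : K) : sym_group.
Proof.
by exists (act g, act (ginv g)); split=> x /=; rewrite -actM ?gmulVl ?gmulV act1.
Defined.

Lemma action_bij_hom : is_hom action_bij.
Proof. by move=> g h; apply: bijection_eq => x /=; rewrite ?ginvM actM. Qed.

End Action.
End SymmetricGroup.

Section NormalForm.
Variables (A B G : group) (iA : A -> G) (iB : B -> G).
Hypothesis fpG : is_free_product iA iB.
Local Notation syllable := (syllable A B).

Definition rword := {w : seq syllable | reduced w}.

Definition act_rword (x : syllable) (w : rword) : rword :=
  exist _ (act x (sval w)) (act_reduced x (svalP w)).

Lemma act_rwordA1 w : act_rword (inl (gone A)) w = w.
Proof. by case: w => w hw; apply: eq_exist; rewrite act_trivial //= asboolT. Qed.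
Lemma act_rwordB1 w : act_rword (inr (gone B)) w = w.
Proof. by case: w => w hw; apply: eq_exist; rewrite act_trivial //= asboolT. Qed.
Lemma act_rwordAM a a' w :
  act_rword (inl (gmul a a')) w = act_rword (inl a) (act_rword (inl a') w).
Proof. by case: w => w hw; apply: eq_exist; rewrite act_mulA. Qed.
Lemma act_rwordBM b b' w :
  act_rword (inr (gmul b b')) w = act_rword (inr b) (act_rword (inr b') w).
Proof. by case: w => w hw; apply: eq_exist; rewrite act_mulB. Qed.

Definition permA : A -> sym_group rword :=
  action_bij (act := fun a => act_rword (inl a)) act_rwordA1 act_rwordAM.
Definition permB : B -> sym_group rword :=
  action_bij (act := fun b => act_rword (inr b)) act_rwordB1 act_rwordBM.

Lemma permA_hom : is_hom permA. Proof. exact: action_bij_hom. Qed.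
Lemma permB_hom : is_hom permB. Proof. exact: action_bij_hom. Qed.

Variable f : G -> sym_group rword.
Hypotheses (f_hom : is_hom f) (fA : forall a, f (iA a) = permA a)
  (fB : forall b, f (iB b) = permB b).

Definition letter (x : syllable) : G := match x with inl a => iA a | inr b => iB b end.

Definition eval (w : seq syllable) : G := foldr (fun x g => gmul (letter x) g) (gone G) w.

(* van der Waerden's trick: [f] is the action of [G] on reduced words induced by the
   actions of [A] and [B], and the normal form of [g] is the image of the empty word. *)
Definition nf (g : G) : seq syllable := sval (bij_app (f g) (exist _ [::] isT)).

Lemma eval_act x w : eval (act x w) = gmul (letter x) (eval w).
Proof.
have [homA [homB _]] := fpG.
case: x => a; case: w => [|[c|c] w] /=; case: asboolP => [e|_] /=;
  rewrite ?gmulA -?homA -?homB ?e ?(hom1 homA) ?(hom1 homB) ?gmul1l //.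
Qed.

Lemma bij_app_letter x w : sval (bij_app (f (letter x)) w) = act x (sval w).
Proof. by case: x => a; rewrite /= ?fA ?fB. Qed.

Lemma eval_bij_app g w : eval (sval (bij_app (f g) w)) = gmul g (eval (sval w)).
Proof.
move: g w; apply: (free_product_ind fpG) => [w|g h IHg IHh w|g IHg w|a w|b w].
- by rewrite (hom1 f_hom) gmul1l.
- by rewrite f_hom bij_appM IHg IHh gmulA.
- by rewrite -{1}(gmulKV g (eval _)) -IHg -bij_appM -f_hom gmulV (hom1 f_hom).
- by rewrite (bij_app_letter (inl a)) eval_act.
- by rewrite (bij_app_letter (inr b)) eval_act.
Qed.

Lemma bij_app_eval u w : sval (bij_app (f (eval u)) w) = wmul u (sval w).
Proof.
elim: u w => [|x u IH] w /=; first by rewrite (hom1 f_hom).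
by rewrite f_hom bij_appM bij_app_letter IH.
Qed.

Lemma nf_reduced g : reduced (nf g).
Proof. exact: (svalP (bij_app (f g) _)). Qed.

Lemma eval_nf g : eval (nf g) = g.
Proof. by rewrite eval_bij_app gmul1r. Qed.

Lemma nf_eval w : reduced w -> nf (eval w) = w.
Proof. by move=> hw; rewrite /nf bij_app_eval wmulw0. Qed.

Lemma nf_mul g h : nf (gmul g h) = wmul (nf g) (nf h).
Proof. by rewrite {1}/nf f_hom bij_appM -{1}(eval_nf g) bij_app_eval. Qed.

Lemma nf1 : nf (gone G) = [::].
Proof. by rewrite /nf (hom1 f_hom). Qed.

Lemma nf_eq_nil g : nf g = [::] -> g = gone G.
Proof. by move=> e; rewrite -(eval_nf g) e. Qed.

End NormalForm.

(** * Runs of automata *)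

Section Runs.
Variables (S X : Type) (tr : S -> X -> S -> bool).

Inductive reach : S -> seq X -> S -> Prop :=
| reach_nil s : reach s [::] s
| reach_cons s x s' w s'' : tr s x s' -> reach s' w s'' -> reach s (x :: w) s''.

Lemma reach_cat s u s' v s'' : reach s u s' -> reach s' v s'' -> reach s (u ++ v) s''.
Proof. by elim=> // s0 x s1 w s2 h _ IH /IH; apply: reach_cons h. Qed.

Lemma reach_nilE s s' : reach s [::] s' -> s' = s.
Proof. by move=> h; inversion h. Qed.

Lemma reach_consE s x w s'' : reach s (x :: w) s'' -> exists2 s', tr s x s' & reach s' w s''.
Proof. by move=> h; inversion h as [|? ? s' ? ? hx hw]; exists s'. Qed.

Lemma reach_rcons s u x s'' :
  reach s (rcons u x) s'' <-> exists2 s', reach s u s' & tr s' x s''.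
Proof.
split=> [|[s' hu hx]]; last by rewrite -cats1; apply: reach_cat hu (reach_cons hx (reach_nil _)).
elim: u s => [|y u IH] s /reach_consE [s1 h1 h2].
  by exists s; [apply: reach_nil | rewrite (reach_nilE h2)].
by have [s2 h3 h4] := IH _ h2; exists s2 => //; apply: reach_cons h1 h3.
Qed.

End Runs.

Lemma nfa_reachE (Y : finType) (M : nfa Y) p u q :
  nfa_reach p u q <-> reach (@ntrans Y M) p u q.
Proof.
by split; elim=> [?|p0 x p1 w p2 h _ IH]; [apply: reach_nil | apply: reach_cons h IH
                                          | apply: nfa_nil | apply: nfa_cons h IH].
Qed.

Lemma reach_rev (S X : Type) (tr : S -> X -> S -> bool) s w s' :
  reach tr s w s' -> reach (fun s x s' => tr s' x s) s' (rev w) s.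
Proof.
elim=> [s0|s0 x s1 w0 s2 h _ IH]; first exact: reach_nil.
by rewrite rev_cons; apply/reach_rcons; exists s1.
Qed.

Section RunMaps.
Variables (S S' X X' : Type) (tr : S -> X -> S -> bool) (tr' : S' -> X' -> S' -> bool).
Variables (h : S -> S') (g : X -> X').

Lemma reach_map : (forall s x s', tr s x s' -> tr' (h s) (g x) (h s')) ->
  forall s w s', reach tr s w s' -> reach tr' (h s) (map g w) (h s').
Proof.
move=> htr s w s'; elim=> [?|s0 x s1 w0 s2 hx _ IH]; first exact: reach_nil.
exact: reach_cons (htr _ _ _ hx) IH.
Qed.

Lemma reach_unmap :
  (forall s x t, tr' (h s) x t -> exists y s', [/\ x = g y, t = h s' & tr s y s']) ->
  forall s w t, reach tr' (h s) w t -> exists u s', [/\ w = map g u, t = h s' & reach tr s u s'].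
Proof.
move=> htr s w; elim: w s => [|x w IH] s t.
  move=> hr; rewrite (reach_nilE hr); exists [::], s; split=> //; apply: reach_nil.
move=> hr; have [t1 /htr [y [s1 [-> -> hy]]] /IH [u [s' [-> -> hu]]]] := reach_consE hr.
by exists (y :: u), s'; split=> //; apply: reach_cons hy hu.
Qed.

End RunMaps.

Section SumRuns.
Variables (S1 S2 X : Type) (tr1 : S1 -> X -> S1 -> bool) (tr2 : S2 -> X -> S2 -> bool).

Definition sum_trans (s : S1 + S2) (x : X) (s' : S1 + S2) : bool :=
  match s, s' with
  | inl s, inl s' => tr1 s x s'
  | inr s, inr s' => tr2 s x s'
  | _, _ => false
  end.

Lemma reach_suml s w t :
  reach sum_trans (inl s) w t <-> exists2 s', t = inl s' & reach tr1 s w s'.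
Proof.
split=> [hr|[s' -> hr]]; last by rewrite -(map_id w); apply: reach_map hr.
have htr p x t' :
    sum_trans (inl p) x t' -> exists y p', [/\ x = id y, t' = inl p' & tr1 p y p'].
  by case: t' => // p' hp; exists x, p'.
by have [u [s' [-> -> hu]]] := reach_unmap htr hr; exists s'; rewrite ?map_id.
Qed.

Lemma reach_sumr s w t :
  reach sum_trans (inr s) w t <-> exists2 s', t = inr s' & reach tr2 s w s'.
Proof.
split=> [hr|[s' -> hr]]; last by rewrite -(map_id w); apply: reach_map hr.
have htr p x t' :
    sum_trans (inr p) x t' -> exists y p', [/\ x = id y, t' = inr p' & tr2 p y p'].
  by case: t' => // p' hp; exists x, p'.
by have [u [s' [-> -> hu]]] := reach_unmap htr hr; exists s'; rewrite ?map_id.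
Qed.

End SumRuns.

Section MonoidHom.
Variables (X : Type) (G : group) (pi : seq X -> G).
Hypothesis pi_hom : is_monoid_hom pi.

Lemma monoid_hom_nil : pi [::] = gone G. Proof. by case: pi_hom. Qed.
Lemma monoid_hom_cat u v : pi (u ++ v) = gmul (pi u) (pi v). Proof. by case: pi_hom. Qed.
Lemma monoid_hom_cons x u : pi (x :: u) = gmul (pi [:: x]) (pi u).
Proof. by rewrite -monoid_hom_cat. Qed.

End MonoidHom.

Section SyllableRecognizer.
Variables (K : group) (ltK : K -> K -> Prop) (Y : finType) (piK : seq Y -> K) (M : nfa Y).
Hypotheses (ltK_order : is_left_order ltK) (piK_hom : is_monoid_hom piK)
  (M_cone : image_is_cone ltK piK (nfa_accepts M)).
Variables (G : group) (kap : K -> G) (X : finType) (piX : seq X -> G) (pos neg : Y -> X).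
Hypotheses (kap_hom : is_hom kap) (piX_hom : is_monoid_hom piX)
  (piX_pos : forall y, piX [:: pos y] = kap (piK [:: y]))
  (piX_neg : forall y, piX [:: neg y] = ginv (kap (piK [:: y]))).

(* [inl q] runs [M] on the letters [pos y] of a positive syllable.  A negative syllable
   [k^-1], with [k] represented by a word accepted by [M], is read as the letters [neg y]
   of that word in reverse order: [inr None] guesses the last letter, after which
   [inr (Some q)] runs [M] backwards down to its start state. *)
Definition sstate : finType := (nstate M + option (nstate M))%type.

Definition strans (s : sstate) (x : X) (s' : sstate) : bool :=
  match s, s' with
  | inl q, inl q' => [exists y, (x == pos y) && ntrans q y q']
  | inr None, inr (Some q) => [exists y, (x == neg y) && [exists f, nfinal f && ntrans q y f]]
  | inr (Some q), inr (Some q') => [exists y, (x == neg y) && ntrans q' y q]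
  | _, _ => false
  end.

Definition sfinal (s : sstate) : bool :=
  match s with inl q => nfinal q | inr (Some q) => q == nstart M | inr None => false end.

Definition sstart (negative : bool) : sstate := if negative then inr None else inl (nstart M).

Definition syllable_word (negative : bool) (w : seq X) : Prop :=
  exists2 s, reach strans (sstart negative) w s & sfinal s.

Lemma piX_pos_word u : piX (map pos u) = kap (piK u).
Proof.
elim: u => [|y u IH]; first by rewrite /= !monoid_hom_nil // (hom1 kap_hom).
by rewrite /= monoid_hom_cons // piX_pos IH -kap_hom -monoid_hom_cons.
Qed.

Lemma piX_neg_word u : piX (map neg u) = ginv (kap (piK (rev u))).
Proof.
elim: u => [|y u IH]; first by rewrite /= !monoid_hom_nil // (hom1 kap_hom) ginv1.
by rewrite /= monoid_hom_cons // piX_neg IH -ginvM -kap_hom rev_cons -cats1 -monoid_hom_cat.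
Qed.

Lemma strans_pos q x t : strans (inl q) x t ->
  exists y q', [/\ x = pos y, t = inl q' & ntrans q y q'].
Proof. by case: t => [q'|//] /existsP [y /andP [/eqP -> hy]]; exists y, q'. Qed.

Lemma strans_neg q x t : strans (inr (Some q)) x t ->
  exists y q', [/\ x = neg y, t = (inr \o Some) q' & ntrans q' y q].
Proof. by case: t => [//|[q'|//]] /existsP [y /andP [/eqP -> hy]]; exists y, q'. Qed.

Lemma reach_pos q u q' :
  reach (@ntrans _ M) q u q' -> reach strans (inl q) (map pos u) (inl q').
Proof. by apply: reach_map => p y p' hy /=; apply/existsP; exists y; rewrite eqxx. Qed.

Lemma reach_neg q u q' : reach (@ntrans _ M) q u q' ->
  reach strans (inr (Some q')) (map neg (rev u)) (inr (Some q)).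
Proof.
move=> hu; apply: (reach_map (h := inr \o Some) _ (reach_rev hu)) => p y p' hy /=.
by apply/existsP; exists y; rewrite eqxx.
Qed.

Lemma syllable_sound n w : syllable_word n w ->
  exists2 k, k <> gone K & `[< ltK k (gone K) >] = n /\ piX w = kap k.
Proof.
case: n => -[s] /= hw hs.
- case: w hw => [hw|x w hw]; first by rewrite (reach_nilE hw) in hs.
  have [t1] := reach_consE hw; case: t1 => [//|[q|//]].
  case/existsP=> y /andP [/eqP -> /existsP [f /andP [hf hqf]]] hw'.
  have [u [p [-> es hu]]] := reach_unmap strans_neg hw'; have {}hu := reach_rev hu.
  rewrite {}es /= in hs; rewrite (eqP hs) in hu.
  have acc : nfa_accepts M (rcons (rev u) y).
    by exists f; split=> //; apply/nfa_reachE/reach_rcons; exists q.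
  have pos_k := M_cone.1 _ acc.
  exists (ginv (piK (rcons (rev u) y))).
    by move=> e; apply: (lt_neq1 ltK_order pos_k); rewrite -(ginvK (piK _)) e ginv1.
  split; first exact/asboolP/(gt1_lt1V ltK_order).
  by rewrite -[neg y :: _]/(map neg (y :: u)) piX_neg_word rev_cons (homV _ kap_hom).
- have [u [q [-> es hu]]] := reach_unmap strans_pos hw.
  rewrite {}es /= in hs.
  have pos_k : ltK (gone K) (piK u) by apply: M_cone.1; exists q; split=> //; apply/nfa_reachE.
  exists (piK u); first exact: (lt_neq1 ltK_order pos_k).
  by rewrite piX_pos_word (asboolF (lt_asym ltK_order pos_k)).
Qed.

Lemma syllable_complete k : k <> gone K ->
  exists2 w, syllable_word `[< ltK k (gone K) >] w & piX w = kap k.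
Proof.
move=> nk; case: asboolP => hk.
- have [u [[f [/nfa_reachE hu hf]] eu]] := M_cone.2 _ (lt1_gt1V ltK_order hk).
  case/lastP: u eu hu => [|u y] eu.
    by move: hk; rewrite -(ginvK k) -eu monoid_hom_nil // ginv1 => /(lt_irr ltK_order).
  case/reach_rcons=> q hu hy.
  exists (neg y :: map neg (rev u)).
    exists (inr (Some (nstart M))); last by rewrite /= eqxx.
    apply: reach_cons (reach_neg hu); apply/existsP; exists y; rewrite eqxx /=.
    by apply/existsP; exists f; rewrite hf hy.
  rewrite -[neg y :: _]/(map neg (y :: rev u)) piX_neg_word rev_cons revK.
  by rewrite eu (homV _ kap_hom) ginvK.
- have [u [[f [hu hf]] eu]] := M_cone.2 _ (gt1_nlt1 ltK_order nk hk).
  exists (map pos u); last by rewrite piX_pos_word eu.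
  by exists (inl f) => //; apply/reach_pos/nfa_reachE.
Qed.

End SyllableRecognizer.

(** * A one-counter automaton adding up weights of regular blocks *)

Definition signed (negative : bool) (n : nat) : Z :=
  if negative then (- Z.of_nat n)%Z else Z.of_nat n.

(* Pop the top symbol and push [k] symbols so that the integer [signed b n] stored by the
   stack c^n and the sign [b] moves by [e]: away from zero push two, towards zero push
   none, and from zero push one and take the sign of [e]. *)
Definition counter_update (b zero : bool) (e : Z) : bool * nat :=
  if (e =? 0)%Z then (b, nat_of_bool (~~ zero))
  else if zero then ((e <? 0)%Z, 1)
  else if b == (e <? 0)%Z then (b, 2) else (b, 0).

Lemma counter_updateP b n e : (-1 <= e <= 1)%Z ->
  let bk := counter_update b (n == 0) e in
  signed bk.1 (if n == 0 then bk.2 else n.-1 + bk.2) = (signed b n + e)%Z /\ bk.2 < 3.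
Proof.
move=> he; have [->|[->|->]] : e = (-1)%Z \/ e = 0%Z \/ e = 1%Z by lia.
all: case: b; case: n => [|n]; rewrite /signed /counter_update; cbn -[Z.of_nat Z.add Z.opp].
all: split=> //; lia.
Qed.

Lemma counter_update_signed b n e b' k : (-1 <= e <= 1)%Z ->
  (b', k) = counter_update b (n == 0) e ->
  signed b' (if n == 0 then k else n.-1 + k) = (signed b n + e)%Z.
Proof. by move=> /(counter_updateP b n) [+ _] ebk; rewrite -ebk. Qed.

Lemma oca_reach_cat (X : finType) (M : oca X) q n u q1 n1 v q2 n2 :
  oca_reach q n u q1 n1 -> oca_reach q1 n1 v q2 n2 -> @oca_reach X M q n (u ++ v) q2 n2.
Proof.
elim=> // [q0 n0 q' n' w q'' n'' h _ IH /IH|q0 n0 x q' n' w q'' n'' h _ IH /IH];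
  [exact: oca_eps h | exact: oca_read h].
Qed.

Section BlockCounterAutomaton.
Variables (X T S : finType) (tr : S -> X -> S -> bool) (start : T -> S) (final : pred S).
Variables (next : T -> T -> bool) (d0 d : T -> Z).
Hypotheses (d0_range : forall t, (-1 <= d0 t <= 1)%Z) (d_range : forall t, (-1 <= d t <= 1)%Z).
Local Open Scope Z_scope.

Definition block (t : T) (w : seq X) : Prop := exists2 s, reach tr (start t) w s & final s.

Inductive blocks : T -> Z -> seq X -> Prop :=
| blocks_nil t v : 0 <= v -> blocks t v [::]
| blocks_cons t t' v w0 w : next t t' -> block t' w0 -> blocks t' (v + d t') w ->
    blocks t v (w0 ++ w).

(* In state [Some (t, s, b)] the automaton reads a block of type [t], [s] being the state
   of its recogniser and [b] the sign of the counter.  From a final [s] it may start a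
   block of any type [t'] with [next t t'], adding [d t'] to the counter; the first block
   adds [d0 t'] instead, and a negative zero may be turned into a positive one. *)
Definition cstate : finType := option (T * S * bool).

Definition ctrans (e : cstate * option X * bool * cstate * nat) : bool :=
  let: (q, a, zero, q', k) := e in
  match q, a, q' with
  | Some (t, s, b), Some x, Some (t', s', b') =>
      [&& t' == t, b' == b, tr s x s' & k == ~~ zero]
  | Some (t, s, b), None, Some (t', s', b') =>
      [&& final s, next t t', s' == start t' & (b', k) == counter_update b zero (d t')]
      || [&& b, zero, t' == t, s' == s, ~~ b' & k == 0%N]
  | None, None, Some (t', s', b') =>
      [&& zero, s' == start t' & (b', k) == counter_update false true (d0 t')]
  | _, _, _ => false
  end.

Definition cfinal (q : cstate) : bool := if q is Some (_, s, false) then final s else false.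

Definition block_oca : oca X :=
  let moves := [seq (p.1, nat_of_ord p.2)
               | p <- enum {: (cstate * option X * bool * cstate) * 'I_3}] in
  OCA None cfinal [seq e <- moves | ctrans e].

Lemma block_oca_trans e : (e \in otrans block_oca) = ctrans e && (e.2 < 3)%N.
Proof.
case: e => p k; rewrite mem_filter /=; congr (_ && _).
apply/mapP/idP => [[[p' k'] _ [_ ->]] //|hk].
by exists (p, Ordinal hk); rewrite ?mem_enum.
Qed.

Lemma block_oca_stepE q n a q' n' : oca_step (M := block_oca) q n a q' n' ->
  match q, a with
  | Some (t, s, b), Some x => exists2 s', tr s x s' & q' = Some (t, s', b) /\ n' = n
  | Some (t, s, b), None =>
      (exists t' b', [/\ final s, next t t', q' = Some (t', start t', b')
                        & signed b' n' = signed b n + d t'])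
      \/ [/\ b, n = 0%N, q' = Some (t, s, false) & n' = 0%N]
  | None, None => exists t' b', [/\ n = 0%N, q' = Some (t', start t', b') & signed b' n' = d0 t']
  | None, Some _ => False
  end.
Proof.
case=> zero [k []]; rewrite block_oca_trans => /andP [he _] [ez ->]; subst zero.
case: q a q' he => [[[t s] b]|] [x|] [[[t' s'] b']|] //=.
- case/and4P=> /eqP -> /eqP -> hs /eqP ->; exists s' => //.
  by case: n => [|n] //=; rewrite addn1.
- case/orP=> [/and4P [hs ht /eqP -> /eqP e]|].
    by left; exists t', b'; split=> //; apply: counter_update_signed.
  case/and5P=> -> /eqP n0 /eqP -> /eqP -> /andP [/negPf -> /eqP ->].
  by right; move: n0; case: n.
- case/and3P=> /eqP n0 /eqP -> /eqP e; exists t', b'; move: n0 e; case: n => // _ e.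
  by split=> //; rewrite (@counter_update_signed false 0%N _ b' k (d0_range t') e).
Qed.

Definition run_inv (q : cstate) (n : nat) (w : seq X) : Prop :=
  match q with
  | None => exists t w0 w1, [/\ w = w0 ++ w1, block t w0 & blocks t (d0 t) w1]
  | Some (t, s, b) => exists w0 w1,
      [/\ w = w0 ++ w1, exists2 s', reach tr s w0 s' & final s' & blocks t (signed b n) w1]
  end.

Lemma run_invP q n w q' n' :
  oca_reach (M := block_oca) q n w q' n' -> cfinal q' -> run_inv q n w.
Proof.
elim=> [q0 n0|q0 n0 q1 n1 w0 q2 n2 hs _ IH|q0 n0 x q1 n1 w0 q2 n2 hs _ IH] hfin.
- case: q0 hfin => [[[t s] []]|] //= hs; exists [::], [::]; split=> //.
    by exists s => //; apply: reach_nil.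
  by apply: blocks_nil; rewrite /signed; lia.
- have {}IH := IH hfin; move: (block_oca_stepE hs); case: q0 {hs} => [[[t s] b]|] //=.
  + case=> [[t' [b' [hs' ht e1 hv]]]|[hb en0 e1 en1]]; subst q1.
      have [w1 [w2 [-> hb1 hbs]]] := IH; exists [::], (w1 ++ w2); split=> //.
        by exists s => //; apply: reach_nil.
      by apply: blocks_cons ht hb1 _; rewrite -hv.
    by subst n0 n1; case: b hb IH.
  + case=> t' [b' [en0 e1 hv]]; subst q1.
    have [w1 [w2 [-> hb1 hbs]]] := IH; exists t', w1, w2; split=> //.
    by rewrite -hv.
- move: (block_oca_stepE hs); case: q0 {hs} => [[[t s] b]|] //= [s' hx [e1 e2]]; subst q1 n1.
  have [w1 [w2 [-> [s'' hr hs''] hbs]]] := IH hfin.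
  by exists (x :: w1), w2; split=> //; exists s''; [apply: reach_cons hx hr|].
Qed.

Lemma block_oca_step q n a q' k : ctrans (q, a, n == 0%N, q', k) -> (k < 3)%N ->
  oca_step (M := block_oca) q n a q' (if n == 0%N then k else (n.-1 + k)%N).
Proof. by move=> he hk; exists (n == 0%N), k; rewrite block_oca_trans he hk. Qed.

Lemma reach_block_oca t s w s' b n : reach tr s w s' ->
  oca_reach (M := block_oca) (Some (t, s, b)) n w (Some (t, s', b)) n.
Proof.
elim=> [s0|s0 x s1 w0 s2 hx _ IH]; first exact: oca_nil.
apply: oca_read IH.
have := @block_oca_step (Some (t, s0, b)) n (Some x) (Some (t, s1, b)) (~~ (n == 0%N)).
by rewrite /= !eqxx hx; case: n => [|n] /(_ isT isT) //; rewrite addn1.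
Qed.

Lemma switch_step t t' s b n : final s -> next t t' -> exists b' n',
  oca_step (M := block_oca) (Some (t, s, b)) n None (Some (t', start t', b')) n' /\
  signed b' n' = signed b n + d t'.
Proof.
move=> hs ht; have [e hk] := counter_updateP b n (d_range t').
case E: counter_update e hk => [b' k] e hk; exists b', (if n == 0%N then k else (n.-1 + k)%N).
by split=> //; apply: block_oca_step => //=; rewrite hs ht eqxx E eqxx.
Qed.

Lemma init_step t : exists b' n',
  oca_step (M := block_oca) None 0%N None (Some (t, start t, b')) n' /\ signed b' n' = d0 t.
Proof.
have [e hk] := counter_updateP false 0%N (d0_range t).
case E: counter_update e hk => [b' k] /= e hk; exists b', k.
by split=> //; apply: (@block_oca_step None 0%N None _ k) => //=; rewrite eqxx E eqxx.
Qed.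

Lemma sign_reset_step t s :
  oca_step (M := block_oca) (Some (t, s, true)) 0%N None (Some (t, s, false)) 0%N.
Proof. by apply: (@block_oca_step _ 0%N _ _ 0%N) => //=; rewrite !eqxx orbT. Qed.

Lemma blocks_accept t v w s b n : blocks t v w -> final s -> signed b n = v ->
  exists q' n', oca_reach (M := block_oca) (Some (t, s, b)) n w q' n' /\ cfinal q'.
Proof.
move=> hbs; elim: hbs s b n => [{}t {}v hv|{}t t' {}v w0 {}w ht [s0 hr hs0] _ IH] s b n hs hsv.
- case: b hsv => hsv; last by exists (Some (t, s, false)), n; split=> //; apply: oca_nil.
  have n0 : n = 0%N by move: hsv hv; rewrite /signed; lia.
  subst n; exists (Some (t, s, false)), 0%N; split=> //.
  exact: oca_eps (sign_reset_step t s) (oca_nil _ _).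
- have [b' [n' [hstep hv]]] := switch_step b n hs ht.
  have hv' : signed b' n' = v + d t' by rewrite hv hsv.
  have [q' [n'' [hr' hq']]] := IH s0 b' n' hs0 hv'.
  exists q', n''; split=> //; apply: oca_eps hstep _.
  exact: oca_reach_cat (reach_block_oca t' b' n' hr) hr'.
Qed.

Lemma block_oca_acceptsP w : oca_accepts block_oca w <->
  exists t w0 w1, [/\ w = w0 ++ w1, block t w0 & blocks t (d0 t) w1].
Proof.
split=> [[q [n [hr hq]]]|[t [w0 [w1 [-> [s hr hs] hbs]]]]]; first exact: run_invP hr hq.
have [b' [k [hstep e]]] := init_step t.
have [q' [n' [hr' hq']]] := blocks_accept hbs hs e.
exists q', n'; split=> //; apply: oca_eps hstep _.
exact: oca_reach_cat (reach_block_oca t b' k hr) hr'.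
Qed.

End BlockCounterAutomaton.

(** * The one-counter left order on a free product *)

Section FreeProductOrder.
Variables (A B G : group) (iA : A -> G) (iB : B -> G).
Hypothesis fpG : is_free_product iA iB.
Variables (ltA : A -> A -> Prop) (ltB : B -> B -> Prop).
Hypotheses (ltA_order : is_left_order ltA) (ltB_order : is_left_order ltB).
Variable f : G -> sym_group (rword A B).
Hypotheses (f_hom : is_hom f) (fA : forall a, f (iA a) = permA B a)
  (fB : forall b, f (iB b) = permB A b).
Local Notation syllable := (syllable A B).
Local Notation nf := (nf f).
Local Notation eval := (eval iA iB).
Local Notation weight := (weight ltA ltB).
Local Open Scope Z_scope.

Definition nf_positive (g : G) : Prop := nf g <> [::] /\ 0 <= weight (nf g).

Lemma nf_positive_mul g h : nf_positive g -> nf_positive h -> nf_positive (gmul g h).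
Proof.
move=> [ng hg] [nh hh]; rewrite /nf_positive (nf_mul fpG f_hom fA fB).
have hred := nf_reduced f; have := weight_wmul_ge ltA_order ltB_order (hred g) (hred h).
split; last by lia.
move=> e; have := weight_wmul_nil ltA_order ltB_order (hred g) (hred h) (introN nilP ng) e.
lia.
Qed.

Lemma nf_positive1 : ~ nf_positive (gone G).
Proof. by rewrite /nf_positive (nf1 f_hom); case. Qed.

Lemma nf_positive_total g : g <> gone G -> nf_positive g \/ nf_positive (ginv g).
Proof.
move=> ng; have ng' : ginv g <> gone G by move=> e; apply: ng; rewrite -(ginvK g) e ginv1.
have hnil h : h <> gone G -> ~~ nilp (nf h).
  by move=> nh; apply/nilP => /(nf_eq_nil fpG f_hom fA fB).
have hred := nf_reduced f.
have := weight_wmul_nil ltA_order ltB_order (hred g) (hred (ginv g)) (hnil _ ng).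
rewrite -(nf_mul fpG f_hom fA fB) gmulV nf1 // => /(_ erefl) hsum.
by have [hg|hg] := Z_le_gt_dec 0 (weight (nf g)); [left|right];
  split; (by apply/nilP/hnil) || lia.
Qed.

Definition syllable_type (x : syllable) : bool * bool := (~~ isA x, negative ltA ltB x).

Definition alternates (t t' : bool * bool) : bool := t.1 != t'.1.
(* An A-syllable that is not the last one is followed by a B-syllable, so the weight of a
   reduced word is [first_delta] of its first syllable plus [next_delta] of the others. *)
Definition first_delta (t : bool * bool) : Z := - Z.b2z t.2.
Definition next_delta (t : bool * bool) : Z := Z.b2z t.1 - Z.b2z t.2.

Definition starts_after (t : bool * bool) (r : seq syllable) : bool :=
  if r is y :: _ then alternates t (syllable_type y) else true.

Fixpoint tail_weight (r : seq syllable) : Z :=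
  if r is y :: r' then next_delta (syllable_type y) + tail_weight r' else 0.

Lemma reduced_cons x r :
  reduced (x :: r) = [&& nontrivial x, starts_after (syllable_type x) r & reduced r].
Proof. by case: r => [|y r] //=; rewrite /alternates /= (inj_eq negb_inj). Qed.

Lemma weight_reduced_cons x r :
  reduced (x :: r) -> weight (x :: r) = first_delta (syllable_type x) + tail_weight r.
Proof.
elim: r x => [|y r IH] x; first by move=> _; rewrite /= /sign_weight /first_delta /=; lia.
case/and3P=> _ hxy hr; rewrite weight_cons2 IH //= /first_delta /next_delta /sign_weight /=.
by case: (isA x) hxy; case: (isA y) => // _; lia.
Qed.

Variables (YA YB : finType) (piA : seq YA -> A) (piB : seq YB -> B) (MA : nfa YA) (MB : nfa YB).
Hypotheses (piA_hom : is_monoid_hom piA) (piB_hom : is_monoid_hom piB)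
  (piA_onto : forall a, exists w, piA w = a) (piB_onto : forall b, exists w, piB w = b)
  (MA_cone : image_is_cone ltA piA (nfa_accepts MA))
  (MB_cone : image_is_cone ltB piB (nfa_accepts MB)).

Definition alphabet : finType := ((YA + YA) + (YB + YB))%type.
Definition posA (y : YA) : alphabet := inl (inl y).
Definition negA (y : YA) : alphabet := inl (inr y).
Definition posB (y : YB) : alphabet := inr (inl y).
Definition negB (y : YB) : alphabet := inr (inr y).

Definition gen (x : alphabet) : G :=
  match x with
  | inl (inl y) => iA (piA [:: y])
  | inl (inr y) => ginv (iA (piA [:: y]))
  | inr (inl y) => iB (piB [:: y])
  | inr (inr y) => ginv (iB (piB [:: y]))
  end.

Definition piX (w : seq alphabet) : G := foldr (fun x g => gmul (gen x) g) (gone G) w.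

Lemma piX_hom : is_monoid_hom piX.
Proof. by split=> // u v; elim: u => /= [|x u ->]; rewrite ?gmul1l ?gmulA. Qed.

Lemma piX1 x : piX [:: x] = gen x.
Proof. exact: gmul1r. Qed.

Lemma piX_onto g : exists w, piX w = g.
Proof.
have [homA [homB _]] := fpG.
rewrite -(eval_nf fpG f_hom fA fB g); elim: (nf g) => [|[a|b] r [w ew]]; first by exists [::].
- have [u <-] := piA_onto a; exists (map posA u ++ w).
  by rewrite (monoid_hom_cat piX_hom) ew (piX_pos_word piA_hom homA piX_hom) // => y; apply: piX1.
- have [u <-] := piB_onto b; exists (map posB u ++ w).
  by rewrite (monoid_hom_cat piX_hom) ew (piX_pos_word piB_hom homB piX_hom) // => y; apply: piX1.
Qed.

Definition bstate : finType := (sstate MA + sstate MB)%type.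

Definition btrans : bstate -> alphabet -> bstate -> bool :=
  sum_trans (strans posA negA) (strans posB negB).

Definition bstart (t : bool * bool) : bstate :=
  if t.1 then inr (sstart MB t.2) else inl (sstart MA t.2).

Definition bfinal (s : bstate) : bool := match s with inl s => sfinal s | inr s => sfinal s end.

Local Notation block := (block btrans bstart bfinal).
Local Notation blocks := (blocks btrans bstart bfinal alternates next_delta).

Lemma block_syllable t w : block t w ->
  exists x, [/\ nontrivial x, syllable_type x = t & piX w = letter iA iB x].
Proof.
have [homA [homB _]] := fpG.
case: t => -[] n [s hr hs].
- have [s' es hu] := (reach_sumr _ _ _ _ _).1 hr; subst s.
  have [k nk [ek ->]] := syllable_sound ltB_order piB_hom MB_cone homB piX_hom
    (fun y => piX1 (posB y)) (fun y => piX1 (negB y)) (ex_intro2 _ _ s' hu hs).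
  by exists (inr k); rewrite /syllable_type /= ek (asboolF nk).
- have [s' es hu] := (reach_suml _ _ _ _ _).1 hr; subst s.
  have [k nk [ek ->]] := syllable_sound ltA_order piA_hom MA_cone homA piX_hom
    (fun y => piX1 (posA y)) (fun y => piX1 (negA y)) (ex_intro2 _ _ s' hu hs).
  by exists (inl k); rewrite /syllable_type /= ek (asboolF nk).
Qed.

Lemma syllable_block x :
  nontrivial x -> exists2 w, block (syllable_type x) w & piX w = letter iA iB x.
Proof.
have [homA [homB _]] := fpG.
case: x => k /asboolPn nk.
- have [w [s hr hs] ew] := syllable_complete ltA_order piA_hom MA_cone homA piX_hom
    (fun y => piX1 (posA y)) (fun y => piX1 (negA y)) nk.
  by exists w => //; exists (inl s) => //; apply/reach_suml; exists s.
- have [w [s hr hs] ew] := syllable_complete ltB_order piB_hom MB_cone homB piX_hom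
    (fun y => piX1 (posB y)) (fun y => piX1 (negB y)) nk.
  by exists w => //; exists (inr s) => //; apply/reach_sumr; exists s.
Qed.

Lemma blocks_reduced t v w : blocks t v w ->
  exists r, [/\ piX w = eval r, reduced r, starts_after t r & 0 <= v + tail_weight r].
Proof.
elim=> [{}t {}v hv|{}t t' {}v w0 {}w ht /block_syllable [x [nx tx ex]] _ [r [er hr hhead hv]]].
  by exists [::]; split=> //=; lia.
exists (x :: r); split; last by rewrite /= tx; lia.
- by rewrite (monoid_hom_cat piX_hom) ex er.
- by rewrite reduced_cons nx tx hr andbT; case: r {er hv} hhead hr.
- by rewrite /= tx.
Qed.

Lemma reduced_blocks t v r : reduced r -> starts_after t r -> 0 <= v + tail_weight r ->
  exists2 w, blocks t v w & piX w = eval r.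
Proof.
elim: r t v => [|x r IH] t v hr hhead hv.
  by exists [::]; [apply: blocks_nil; move: hv => /=; lia | apply: monoid_hom_nil piX_hom].
move: hr; rewrite reduced_cons => /and3P [nx hxr hr].
have [w0 hb ew0] := syllable_block nx.
have [|w1 hbs ew1] := IH (syllable_type x) (v + next_delta (syllable_type x)) hr hxr.
  by move: hv => /=; lia.
exists (w0 ++ w1); first exact: blocks_cons hhead hb hbs.
by rewrite (monoid_hom_cat piX_hom) ew0 ew1.
Qed.

Definition free_product_oca : oca alphabet :=
  block_oca btrans bstart bfinal alternates first_delta next_delta.

Lemma first_delta_range t : -1 <= first_delta t <= 1.
Proof. by case: t => ? []; rewrite /first_delta /=; lia. Qed.

Lemma next_delta_range t : -1 <= next_delta t <= 1.
Proof. by case: t => [[] []]; rewrite /next_delta /=; lia. Qed.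

Lemma oca_accepts_positive w : oca_accepts free_product_oca w -> nf_positive (piX w).
Proof.
case/(block_oca_acceptsP _ _ _ _ first_delta_range next_delta_range)=> t [w0 [w1 [-> hb hbs]]].
have [x [nx tx ex]] := block_syllable hb; have [r [er hr hhead hv]] := blocks_reduced hbs.
have hxr : reduced (x :: r) by rewrite reduced_cons nx tx hhead.
rewrite (monoid_hom_cat piX_hom) ex er -[gmul _ _]/(eval (x :: r)).
by rewrite /nf_positive (nf_eval f_hom fA fB hxr) weight_reduced_cons // tx.
Qed.

Lemma positive_oca_accepts g :
  nf_positive g -> exists2 w, oca_accepts free_product_oca w & piX w = g.
Proof.
case=> ng hg; have hred := nf_reduced f g; rewrite -(eval_nf fpG f_hom fA fB g).
case: (nf g) ng hg hred => [//|x r] _; rewrite reduced_cons => hg /and3P [nx hxr hr].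
rewrite weight_reduced_cons ?reduced_cons ?nx ?hxr // in hg.
have [w0 hb ew0] := syllable_block nx; have [w1 hbs ew1] := reduced_blocks hr hxr hg.
exists (w0 ++ w1); last by rewrite (monoid_hom_cat piX_hom) ew0 ew1.
apply/(block_oca_acceptsP _ _ _ _ first_delta_range next_delta_range).
by exists (syllable_type x), w0, w1.
Qed.

Lemma free_product_one_counter : one_counter_left_order (cone_lt nf_positive).
Proof.
split; first exact: cone_lt_left_order nf_positive_mul nf_positive1 nf_positive_total.
exists alphabet, piX; split; first exact: piX_hom.
split; first exact: piX_onto.
exists free_product_oca; split=> [w /oca_accepts_positive|g /positive_cone_lt].
  by rewrite positive_cone_lt.
by case/positive_oca_accepts=> w hw ew; exists w.
Qed.

End FreeProductOrder.

Theorem corollary5p9 (A B G : group) (iA : A -> G) (iB : B -> G) :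
  is_free_product iA iB ->
  admits_regular_left_order A -> admits_regular_left_order B ->
  admits_one_counter_left_order G.
Proof.
move=> fpG [ltA [ltA_order [YA [piA [piA_hom [piA_onto [MA MA_cone]]]]]]].
move=> [ltB [ltB_order [YB [piB [piB_hom [piB_onto [MB MB_cone]]]]]]].
have [homA [homB univ]] := fpG.
have [[f [f_hom [fA fB]]] _] := univ _ _ _ (@permA_hom A B) (@permB_hom A B).
eexists; exact: (free_product_one_counter fpG ltA_order ltB_order f_hom fA fB
  piA_hom piB_hom piA_onto piB_onto MA_cone MB_cone).
Qed.
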